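(* Let $\langle A,\to\rangle$ be a conditional algebra. The correspondence $B\mapsto E_B$ is a dual lattice isomorphism between the lattice of domains of subalgebras of $\langle A,\to\rangle$ (Boolean subalgebras of $A$ closed under $\to$) and the lattice of C-equivalences of the expanded Stone space $\langle\mathrm{Ul}(A),\tau_s,T_A\rangle$.
   Context: A conditional algebra is $\langle A,\to\rangle$ with $A$ a Boolean algebra and $\to$ binary with $a\to1=1$, $(a\to b)\wedge(a\to c)=a\to(b\wedge c)$, $(a\vee b)\to c\le(a\to c)\wedge(b\to c)$. $\mathrm{Ul}(A)$ is the Stone space of ultrafilters; closed sets are the sets $\varphi(F)=\{u:F\subseteq u\}$ for filters $F$ (the improper filter $A$ included). $D^{\to}_u(F)=\{b:\exists a\in F,\ a\to b\in u\}$; $T_A(u,Z,v)$ iff there is a filter $F$ with $Z=\varphi(F)$ and $D^{\to}_u(F)\subseteq v$. $E_B=\{(u,v): u\cap B=v\cap B\}$. For an equivalence $E$ and closed $Y,C$: $Y\preceq_E C$ iff every $y\in Y$ is $E$-related to some $x\in C$. $E$ is a C-equivalence if it is a Boolean equivalence (for each $(x,y)\notin E$ there is a clopen $E$-closed set containing $x$ but not $y$) and whenever $E(x,y)$ and $T_A(x,Y,x')$ with $Y$ closed, there are $y'$ with $E(x',y')$ and closed $C$ with $T_A(y,C,y')$ and $C\preceq_E Y$. *)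

(* Boolean algebras are ctbDistrLatticeType (complemented
   distributive lattices with top and bottom). *)
From mathcomp Require Import all_boot all_order.
Set Implicit Arguments. Unset Strict Implicit. Unset Printing Implicit Defensive.
Import Order.Theory.
Local Open Scope order_scope.

Section CondAlg.
Context {d : Order.disp_t} {A : ctbDistrLatticeType d}.

Definition cond_alg (imp : A -> A -> A) : Prop :=
  (forall a, imp a \top = \top) /\
  (forall a b c, imp a b `&` imp a c = imp a (b `&` c)) /\
  (forall a b c, imp (a `|` b) c <= imp a c `&` imp b c).

Definition is_filter (F : A -> Prop) : Prop :=
  F \top /\ (forall a b, F a -> a <= b -> F b) /\
  (forall a b, F a -> F b -> F (a `&` b)).

Definition proper_filter (F : A -> Prop) : Prop := is_filter F /\ ~ F \bot.

Definition ultrafilter (u : A -> Prop) : Prop :=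
  proper_filter u /\
  (forall G, proper_filter G -> (forall a, u a -> G a) -> forall a, G a -> u a).

Definition Ul : Type := {u : A -> Prop | ultrafilter u}.

Definition phi (F : A -> Prop) : Ul -> Prop :=
  fun u => forall a, F a -> proj1_sig u a.

Definition closed_set (Y : Ul -> Prop) : Prop :=
  exists F, is_filter F /\ forall u, Y u <-> phi F u.

Definition clopen (Y : Ul -> Prop) : Prop :=
  closed_set Y /\ closed_set (fun u => ~ Y u).

Definition Dimp (imp : A -> A -> A) (u : Ul) (F : A -> Prop) : A -> Prop :=
  fun b => exists a, F a /\ proj1_sig u (imp a b).

Definition TA (imp : A -> A -> A) (u : Ul) (Z : Ul -> Prop) (v : Ul) : Prop :=
  exists F, is_filter F /\ (forall w, Z w <-> phi F w) /\
    (forall b, Dimp imp u F b -> proj1_sig v b).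

Definition EB (B : A -> Prop) : Ul -> Ul -> Prop :=
  fun u v => forall b, B b -> (proj1_sig u b <-> proj1_sig v b).

Definition equivalence (E : Ul -> Ul -> Prop) : Prop :=
  (forall x, E x x) /\ (forall x y, E x y -> E y x) /\
  (forall x y z, E x y -> E y z -> E x z).

Definition E_closed (E : Ul -> Ul -> Prop) (U : Ul -> Prop) : Prop :=
  forall x y, U x -> E x y -> U y.

Definition boolean_equiv (E : Ul -> Ul -> Prop) : Prop :=
  equivalence E /\
  forall x y, ~ E x y -> exists U, clopen U /\ E_closed E U /\ U x /\ ~ U y.

Definition preceq (E : Ul -> Ul -> Prop) (Y C : Ul -> Prop) : Prop :=
  forall y, Y y -> exists x, C x /\ E y x.

Definition C_equiv (imp : A -> A -> A) (E : Ul -> Ul -> Prop) : Prop :=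
  boolean_equiv E /\
  forall x y x' (Y : Ul -> Prop), E x y -> closed_set Y -> TA imp x Y x' ->
    exists y' (C : Ul -> Prop),
      E x' y' /\ closed_set C /\ TA imp y C y' /\ preceq E C Y.

Definition subalg (imp : A -> A -> A) (B : A -> Prop) : Prop :=
  B \top /\ B \bot /\
  (forall a b, B a -> B b -> B (a `&` b)) /\
  (forall a b, B a -> B b -> B (a `|` b)) /\
  (forall a, B a -> B (~` a)) /\
  (forall a b, B a -> B b -> B (imp a b)).

End CondAlg.

From mathcomp Require Import all_boot all_order.
From mathcomp Require Import boolp classical_sets.
Set Implicit Arguments. Unset Strict Implicit. Unset Printing Implicit Defensive.
Import Order.Theory.
Local Open Scope order_scope.

(* Everything rests on the separation principle for ultrafilters: two meet-closed
   subsets S, T of A with s `&` t <> \bot throughout lie in a common ultrafilter.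
   Since E_B-classes are determined by traces u ∩ B, moving along E_B amounts to
   building an ultrafilter that contains a prescribed trace and a second
   meet-closed set.  Conversely, clopens of Ul(A) are basic, so a Boolean
   equivalence E equals E_B for B the set of elements whose basic clopen is
   E-saturated; the C-condition, applied to a successor T_A(y, φ(↑a), y') with
   b ∉ y' witnessing a → b ∉ y, shows that this B is closed under →. *)

Local Notation "u ∋ a" := (proj1_sig u a) (at level 70, no associativity).

Section Filters.
Context {d : Order.disp_t} {A : ctbDistrLatticeType d}.

Definition is_meet_closed (S : A -> Prop) : Prop :=
  S \top /\ forall a b, S a -> S b -> S (a `&` b).

Lemma filter_meet_closed (F : A -> Prop) : is_filter F -> is_meet_closed F.
Proof. by case=> F1 [_ FI]; split. Qed.

Lemma principal_filter (a : A) : is_filter (fun x => a <= x).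
Proof.
split; first exact: lex1.
split; first by move=> x y ax xy; exact: le_trans ax xy.
by move=> x y ax ay; rewrite lexI ax ay.
Qed.

Definition meet_gen (S T : A -> Prop) : A -> Prop :=
  fun x => exists s t, [/\ S s, T t & s `&` t <= x].

Lemma meet_gen_filter (S T : A -> Prop) :
  is_meet_closed S -> is_meet_closed T -> is_filter (meet_gen S T).
Proof.
move=> [S1 SI] [T1 TI]; split; first by exists \top, \top; rewrite lex1.
split.
  by move=> x y [s [t [Ss Tt st]]] xy; exists s, t; split=> //; exact: le_trans xy.
move=> x y [s [t [Ss Tt st]]] [s' [t' [Ss' Tt' st']]].
exists (s `&` s'), (t `&` t'); split; [exact: SI | exact: TI |].
rewrite lexI; apply/andP; split; [apply: le_trans st | apply: le_trans st'].
all: by apply: leI2; rewrite ?leIl ?leIr.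
Qed.

Lemma meet_gen_l (S T : A -> Prop) s : T \top -> S s -> meet_gen S T s.
Proof. by move=> T1 Ss; exists s, \top; rewrite meetx1. Qed.

Lemma meet_gen_r (S T : A -> Prop) t : S \top -> T t -> meet_gen S T t.
Proof. by move=> S1 Tt; exists \top, t; rewrite meet1x. Qed.

Lemma bigcup_chain_proper_filter (I : Type) (C : set I) (G : I -> set A) i0 :
  C i0 -> (forall i, C i -> proper_filter (G i)) ->
  total_on C (fun i j => (G i `<=` G j)%classic) ->
  proper_filter (\bigcup_(i in C) G i)%classic.
Proof.
move=> Ci0 CG Ctot; split; last by move=> [i Ci]; apply: (CG i Ci).2.
split; first by exists i0 => //; case: (CG i0 Ci0) => [[]].
split.
  move=> a b [i Ci Ga] ab; exists i => //.
  by case: (CG i Ci) => [[_ [Gup _]] _]; exact: Gup ab.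
move=> a b [i Ci Ga] [j Cj Gb].
have [ij|ji] := Ctot i j Ci Cj.
- by exists j => //; case: (CG j Cj) => [[_ [_ GI]] _]; exact: GI (ij _ Ga) Gb.
- by exists i => //; case: (CG i Ci) => [[_ [_ GI]] _]; exact: GI Ga (ji _ Gb).
Qed.

Definition ftrace (B F : A -> Prop) : A -> Prop :=
  fun c => exists f, [/\ F f, B f & f <= c].

Lemma ftrace_filter (B F : A -> Prop) :
  is_meet_closed B -> is_filter F -> is_filter (ftrace B F).
Proof.
move=> [B1 BI] [F1 [_ FI]]; split; first by exists \top.
split; first by move=> a b [f [Ff Bf fa]] ab; exists f; split=> //; exact: le_trans ab.
move=> a b [f [Ff Bf fa]] [g [Fg Bg gb]]; exists (f `&` g).
by split; [exact: FI | exact: BI | exact: leI2].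
Qed.

End Filters.

Section Ultrafilters.
Context {d : Order.disp_t} {A : ctbDistrLatticeType d}.
Local Notation Ul := (@Ul d A).

Lemma ultrafilter_extension (F : A -> Prop) :
  proper_filter F -> exists u : Ul, forall a, F a -> u ∋ a.
Proof.
move=> pF; pose T := {G : set A | proper_filter G /\ (F `<=` G)%classic}.
pose F0 : T := exist _ F (conj pF (@subset_refl _ F)).
have [[M [pM FM]] Mmax] :
    exists M : T, premaximal (fun G H => `[< (sval G `<=` sval H)%classic >]) M.
  apply: (ZL_preorder F0) => [G|G H K /asboolP GH /asboolP HK|C Ctot].
  - exact/asboolP.
  - exact/asboolP/(subset_trans GH).
  have [[G0 CG0]|C0] := pselect (exists G, C G); last first.
    by exists F0 => G CG; exfalso; apply: C0; exists G.
  have Ctot' : total_on C (fun G H => (sval G `<=` sval H)%classic).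
    by move=> G H CG CH; case: (Ctot G H CG CH) => /asboolP; [left|right].
  have pU := bigcup_chain_proper_filter (G := sval) CG0
    (fun G _ => proj1 (proj2_sig G)) Ctot'.
  have FU : (F `<=` \bigcup_(G in C) sval G)%classic.
    by apply: subset_trans (bigcup_sup CG0); exact: (proj2 (proj2_sig G0)).
  exists (exist _ (\bigcup_(G in C) sval G)%classic (conj pU FU)) => G CG.
  by apply/asboolP; exact: bigcup_sup.
have uM : ultrafilter M.
  split=> // G pG MG; have FG : (F `<=` G)%classic := subset_trans FM MG.
  by have /asboolP := Mmax (exist _ G (conj pG FG)) (asboolT MG).
by exists (exist _ M uM).
Qed.

Section UltrafilterMembership.
Variable u : Ul.

Lemma ul_filter : is_filter (proj1_sig u). Proof. by case: u => ? [[]]. Qed.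

Lemma ul_top : u ∋ \top. Proof. by case: ul_filter. Qed.

Lemma ul_up a b : u ∋ a -> a <= b -> u ∋ b.
Proof. by case: ul_filter => _ [+ _]; apply. Qed.

Lemma ul_meet a b : u ∋ a -> u ∋ b -> u ∋ a `&` b.
Proof. by case: ul_filter => _ [_]; apply. Qed.

Lemma ul_bot : ~ u ∋ \bot. Proof. by case: u => ? [[]]. Qed.

Lemma ul_meetP a b : u ∋ a `&` b <-> u ∋ a /\ u ∋ b.
Proof.
split=> [ab|[]]; last exact: ul_meet.
by split; apply: ul_up ab _; rewrite ?leIl ?leIr.
Qed.

Lemma ul_complN a : u ∋ a -> ~ u ∋ ~` a.
Proof. by move=> ua uca; apply: ul_bot; rewrite -(meetxC a); exact: ul_meet. Qed.

Lemma ul_compl a : ~ u ∋ a -> u ∋ ~` a.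
Proof.
move=> na; have [[s [t [us ta st]]]|nbot] :=
  pselect (meet_gen (proj1_sig u) (fun x => a <= x) \bot).
  apply: ul_up us _; rewrite -disj_leC -lex0; apply: le_trans st.
  exact: leI2.
have [_ umax] := proj2_sig u; exfalso; apply: na.
have pG : proper_filter (meet_gen (proj1_sig u) (fun x => a <= x)).
  split=> //; apply: meet_gen_filter; apply: filter_meet_closed.
    exact: ul_filter.
  exact: principal_filter.
apply: umax pG _ _ (meet_gen_r ul_top (lexx a)) => b ub.
exact: meet_gen_l (lex1 a) ub.
Qed.

Lemma ul_join a b : u ∋ a `|` b -> u ∋ a \/ u ∋ b.
Proof.
move=> uab; have [ua|na] := pselect (u ∋ a); [by left | right].
apply: contrapT => nb; apply: ul_complN uab _.
by rewrite complU; apply: ul_meet; exact: ul_compl.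
Qed.

End UltrafilterMembership.

Lemma ul_trace_meet_closed (u : Ul) (B : A -> Prop) :
  is_meet_closed B -> is_meet_closed (fun c => u ∋ c /\ B c).
Proof.
move=> [B1 BI]; split; first by split; [exact: ul_top|].
by move=> a b [ua Ba] [ub Bb]; split; [exact: ul_meet | exact: BI].
Qed.

Lemma ultrafilter_separation (S T : A -> Prop) : is_meet_closed S -> is_meet_closed T ->
  (forall s t, S s -> T t -> s `&` t != \bot) ->
  exists u : Ul, (forall s, S s -> u ∋ s) /\ (forall t, T t -> u ∋ t).
Proof.
move=> mS mT ST; have [u Gu] : exists u : Ul, forall x, meet_gen S T x -> u ∋ x.
  apply: ultrafilter_extension; split; first exact: meet_gen_filter.
  by move=> [s [t [Ss Tt]]]; rewrite lex0; apply/negP/ST.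
exists u; split=> [s Ss|t Tt]; apply: Gu.
  exact: meet_gen_l (proj1 mT) Ss.
exact: meet_gen_r (proj1 mS) Tt.
Qed.

Lemma closed_phi (F : A -> Prop) : is_filter F -> closed_set (phi F).
Proof. by exists F. Qed.

Lemma clopen_basic (c : A) : clopen (fun w : Ul => w ∋ c).
Proof.
split.
  exists (fun x => c <= x); split=> [|w]; first exact: principal_filter.
  by split=> [wc x cx|]; [exact: ul_up cx | apply].
exists (fun x => ~` c <= x); split=> [|w]; first exact: principal_filter.
split=> [nwc x cx|wc' wc]; first by apply: ul_up cx; exact: ul_compl.
exact: ul_complN wc (wc' _ (lexx _)).
Qed.

Lemma clopen_basicP (U : Ul -> Prop) : clopen U -> exists c, forall w, U w <-> w ∋ c.
Proof.
move=> [[F [fF UF]] [G [fG UG]]].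
have [[a [b [Fa Gb ab]]]|none] := pselect (exists a b, [/\ F a, G b & a `&` b == \bot]).
  exists a => w; split=> [/UF|wa]; first by apply.
  apply: contrapT => /UG wG; apply: ul_complN wa _.
  by apply: ul_up (wG b Gb) _; rewrite -disj_leC meetC.
have [w [wF wG]] : exists w : Ul, (forall a, F a -> w ∋ a) /\ (forall b, G b -> w ∋ b).
  apply: ultrafilter_separation.
  - exact: filter_meet_closed fF.
  - exact: filter_meet_closed fG.
  by move=> a b Fa Gb; apply/negP => ab; apply: none; exists a, b.
by case: (proj2 (UG w) wG); apply/UF.
Qed.

End Ultrafilters.

Section EquivalenceOfSubset.
Context {d : Order.disp_t} {A : ctbDistrLatticeType d}.
Local Notation Ul := (@Ul d A).
Variable B : A -> Prop.

Lemma EB_equivalence : equivalence (EB B).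
Proof.
split; first by [].
split; first by move=> x y xy b Bb; apply: iff_sym; exact: xy.
by move=> x y z xy yz b Bb; apply: iff_trans (xy b Bb) (yz b Bb).
Qed.

Hypothesis B_compl : forall a, B a -> B (~` a).

Lemma EB_of_trace (x y : Ul) : (forall c, x ∋ c -> B c -> y ∋ c) -> EB B x y.
Proof.
move=> xy b Bb; split=> [|yb]; first by move/xy; apply.
apply: contrapT => /ul_compl xnb.
exact: ul_complN yb (xy _ xnb (B_compl Bb)).
Qed.

Lemma EB_boolean : boolean_equiv (EB B).
Proof.
split; first exact: EB_equivalence.
move=> x y /existsNP [b /not_implyP [Bb xy]].
have [xb|xnb] := pselect (x ∋ b).
  exists (fun w => w ∋ b); split; first exact: clopen_basic.
  split; first by move=> w w' wb /(_ b Bb) [+ _]; apply.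
  by split=> // yb; apply: xy.
exists (fun w => w ∋ ~` b); split; first exact: clopen_basic.
split; first by move=> w w' wb /(_ _ (B_compl Bb)) [+ _]; apply.
split; first exact: ul_compl.
by move=> ynb; apply: xy; split=> // yb; exfalso; exact: ul_complN yb ynb.
Qed.

Hypotheses (B_bot : B \bot) (B_join : forall a b, B a -> B b -> B (a `|` b)).

Lemma boolean_meet_closed : is_meet_closed B.
Proof.
split; first by rewrite -compl0; exact: B_compl.
by move=> a b Ba Bb; rewrite -[a `&` b]complK complI; auto.
Qed.

Lemma ul_avoiding_below a : ~ B a ->
  exists x : Ul, x ∋ a /\ forall c, B c -> c <= a -> x ∋ ~` c.
Proof.
move=> nBa; pose S s := exists2 c, B c /\ c <= a & ~` c <= s.
have [x [xa xS]] : exists x : Ul,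
    (forall t, a <= t -> x ∋ t) /\ (forall s, S s -> x ∋ s).
  apply: ultrafilter_separation; first exact/filter_meet_closed/principal_filter.
    split; first by exists \bot; rewrite ?le0x ?lex1.
    move=> s s' [c [Bc ca] cs] [c' [Bc' c'a] c's]; exists (c `|` c').
      by split; [exact: B_join | rewrite leUx ca c'a].
    by rewrite complU; exact: leI2.
  move=> t s ta [c [Bc ca] cs]; rewrite disj_leC; apply/negP => tcs.
  apply: nBa; suff -> : a = c by [].
  apply/le_anti; rewrite ca andbT -leC; apply: le_trans cs _.
  by rewrite lexC in tcs; apply: le_trans tcs _; rewrite leC.
by exists x; split=> [|c Bc ca]; [exact: xa | apply: xS; exists c].
Qed.

Lemma EB_invariant_mem a : (forall x y : Ul, EB B x y -> x ∋ a -> y ∋ a) -> B a.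
Proof.
move=> inv; apply: contrapT => /ul_avoiding_below [x [xa xbelow]].
have [y [yx yna]] : exists y : Ul,
    (forall c, x ∋ c /\ B c -> y ∋ c) /\ (forall t, ~` a <= t -> y ∋ t).
  apply: ultrafilter_separation.
  - exact/ul_trace_meet_closed/boolean_meet_closed.
  - exact/filter_meet_closed/principal_filter.
  move=> c t [xc Bc] ta; rewrite disj_leC; apply/negP => ct.
  have ca : c <= a by rewrite -leC; apply: le_trans ta _; rewrite lexC.
  exact: ul_complN xc (xbelow c Bc ca).
have xy : EB B x y by apply: EB_of_trace => c xc Bc; exact: yx.
exact: ul_complN (inv x y xy xa) (yna _ (lexx _)).
Qed.

Lemma EB_subset_iff (B' : A -> Prop) :
  (forall a, B' a -> B a) <-> (forall u v : Ul, EB B u v -> EB B' u v).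
Proof.
split=> [B'B u v uv b B'b|EBB' a B'a]; first exact: uv _ (B'B _ B'b).
by apply: EB_invariant_mem => x y xy; apply: (EBB' x y xy a B'a).1.
Qed.

End EquivalenceOfSubset.

Section SaturatedElements.
Context {d : Order.disp_t} {A : ctbDistrLatticeType d}.
Local Notation Ul := (@Ul d A).
Variable E : Ul -> Ul -> Prop.

Definition saturated (a : A) : Prop := E_closed E (fun w : Ul => w ∋ a).

Lemma saturated_back a x y : equivalence E -> saturated a -> E x y -> y ∋ a -> x ∋ a.
Proof. by case=> _ [Esym _] Sa /Esym Eyx ya; exact: Sa ya Eyx. Qed.

Lemma boolean_equiv_EB_saturated :
  boolean_equiv E -> forall u v, E u v <-> EB saturated u v.
Proof.
move=> [Eeq Esep] u v; split=> [Euv b Sb|EBuv].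
  by split=> [ub|vb]; [exact: Sb Euv | exact: saturated_back Eeq Sb Euv vb].
apply: contrapT => /Esep [U [/clopen_basicP [c Uc] [EU [Uu nUv]]]].
have Sc : saturated c by move=> x y /Uc xc Exy; apply/Uc; exact: EU Exy.
by apply: nUv; apply/Uc/(EBuv c Sc)/Uc.
Qed.

Lemma saturated_subalg (imp : A -> A -> A) : equivalence E ->
  (forall a b, saturated a -> saturated b -> saturated (imp a b)) -> subalg imp saturated.
Proof.
move=> Eeq Simp; have Scompl a : saturated a -> saturated (~` a).
  move=> Sa x y xna Exy; apply: ul_compl => ya.
  exact: ul_complN (saturated_back Eeq Sa Exy ya) xna.
split; first by move=> x y _ _; exact: ul_top.
split; first by move=> x y /ul_bot.
split.
  move=> a b Sa Sb x y /ul_meetP [xa xb] Exy.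
  by apply/ul_meetP; split; [exact: Sa Exy | exact: Sb Exy].
split; last by split; [exact: Scompl | exact: Simp].
move=> a b Sa Sb x y /ul_join [xa|xb] Exy.
  by apply: ul_up (Sa _ _ xa Exy) _; exact: leUl.
by apply: ul_up (Sb _ _ xb Exy) _; exact: leUr.
Qed.

Lemma saturated_preceq_mem (G : A -> Prop) a :
  equivalence E -> is_filter G -> saturated a ->
  preceq E (phi G) (phi (fun c => a <= c)) -> G a.
Proof.
move=> Eeq fG Sa GY; apply: contrapT => nGa.
have [z [zG zna]] : exists z : Ul,
    (forall g, G g -> z ∋ g) /\ (forall t, ~` a <= t -> z ∋ t).
  apply: ultrafilter_separation.
  - exact: filter_meet_closed.
  - exact/filter_meet_closed/principal_filter.
  move=> g t Gg ta; rewrite disj_leC; apply/negP => gt; apply: nGa.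
  by case: fG => _ [Gup _]; apply: Gup Gg _; apply: le_trans gt _; rewrite leCx.
have [w [wa Ezw]] := GY z zG.
exact: ul_complN (saturated_back Eeq Sa Ezw (wa a (lexx a))) (zna _ (lexx _)).
Qed.

End SaturatedElements.

Section ConditionalAlgebra.
Context {d : Order.disp_t} {A : ctbDistrLatticeType d}.
Local Notation Ul := (@Ul d A).
Variable imp : A -> A -> A.
Hypothesis hA : cond_alg imp.

Lemma imp_top a : imp a \top = \top. Proof. by case: hA. Qed.

Lemma imp_meet a b c : imp a b `&` imp a c = imp a (b `&` c).
Proof. by case: hA => _ []. Qed.

Lemma imp_mono a b c : b <= c -> imp a b <= imp a c.
Proof. by move=> bc; rewrite -(meet_l bc) -imp_meet leIr. Qed.

Lemma imp_anti a a' c : a <= a' -> imp a' c <= imp a c.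
Proof.
case: hA => _ [_ impU] aa'; have := impU a a' c.
by rewrite (join_r aa') lexI => /andP [].
Qed.

Lemma Dimp_meet_closed (u : Ul) (F : A -> Prop) :
  is_filter F -> is_meet_closed (Dimp imp u F).
Proof.
move=> [F1 [_ FI]]; split; first by exists \top; rewrite imp_top; split=> //; exact: ul_top.
move=> b c [a [Fa uab]] [a' [Fa' ua'c]]; exists (a `&` a'); split; first exact: FI.
rewrite -imp_meet; apply: ul_meet.
  by apply: ul_up uab _; apply: imp_anti; exact: leIl.
by apply: ul_up ua'c _; apply: imp_anti; exact: leIr.
Qed.

Lemma TA_not_imp (y : Ul) a b : ~ y ∋ imp a b ->
  exists y', TA imp y (phi (fun c => a <= c)) y' /\ y' ∋ ~` b.
Proof.
move=> nyab; have [y' [Dy' y'nb]] : exists y' : Ul,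
    (forall c, Dimp imp y (fun c => a <= c) c -> y' ∋ c) /\
    (forall t, ~` b <= t -> y' ∋ t).
  apply: ultrafilter_separation.
  - exact/Dimp_meet_closed/principal_filter.
  - exact/filter_meet_closed/principal_filter.
  move=> c t [a' [aa' ya'c]] bt; rewrite disj_leC; apply/negP => ct; apply: nyab.
  apply: ul_up ya'c _; apply: le_trans (imp_anti _ aa') (imp_mono _ _).
  by apply: le_trans ct _; rewrite leCx.
exists y'; split; last exact: y'nb.
by exists (fun c => a <= c); split; [exact: principal_filter|].
Qed.

Section Subalgebra.
Variable B : A -> Prop.
Hypothesis hB : subalg imp B.

Lemma subalg_meet_closed : is_meet_closed B.
Proof. by case: hB => B1 [_ [BI _]]; split. Qed.

Lemma subalg_compl a : B a -> B (~` a).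
Proof. by case: hB => _ [_ [_ [_ [BC _]]]]; exact: BC. Qed.

Lemma subalg_imp a b : B a -> B b -> B (imp a b).
Proof. by case: hB => _ [_ [_ [_ [_ Bimp]]]]; exact: Bimp. Qed.

Lemma EB_TA_lift (x y x' : Ul) (F : A -> Prop) : EB B x y -> is_filter F ->
  (forall b, Dimp imp x F b -> x' ∋ b) ->
  exists y', EB B x' y' /\ forall b, Dimp imp y (ftrace B F) b -> y' ∋ b.
Proof.
move=> Exy fF Dx.
have [y' [Dy' y'x']] : exists y' : Ul,
    (forall b, Dimp imp y (ftrace B F) b -> y' ∋ b) /\
    (forall c, x' ∋ c /\ B c -> y' ∋ c).
  apply: ultrafilter_separation.
  - exact/Dimp_meet_closed/ftrace_filter/fF/subalg_meet_closed.
  - exact/ul_trace_meet_closed/subalg_meet_closed.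
  move=> e c [g [[f [Ff Bf fg]] yge]] [x'c Bc]; rewrite disj_leC; apply/negP => ec.
  have Bfc : B (imp f (~` c)) by apply: subalg_imp Bf (subalg_compl Bc).
  have yfc : y ∋ imp f (~` c).
    by apply: ul_up yge _; apply: le_trans (imp_anti _ fg) (imp_mono _ ec).
  have x'nc : x' ∋ ~` c by apply: Dx; exists f; split=> //; apply/(Exy _ Bfc).
  exact: ul_complN x'c x'nc.
exists y'; split=> //; apply: EB_of_trace => [|c x'c Bc]; first exact: subalg_compl.
exact: y'x'.
Qed.

Lemma ftrace_preceq (F : A -> Prop) : is_filter F ->
  preceq (EB B) (phi (ftrace B F)) (phi F).
Proof.
move=> fF z zG.
have [w [wF wz]] : exists w : Ul,
    (forall f, F f -> w ∋ f) /\ (forall c, z ∋ c /\ B c -> w ∋ c).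
  apply: ultrafilter_separation.
  - exact: filter_meet_closed.
  - exact/ul_trace_meet_closed/subalg_meet_closed.
  move=> f c Ff [zc Bc]; rewrite disj_leC; apply/negP => fc.
  apply: ul_complN zc (zG _ _); exists (~` c); split=> //; last exact: subalg_compl.
  by case: fF => _ [Fup _]; exact: Fup Ff fc.
exists w; split=> //; apply: EB_of_trace => [|c zc Bc]; first exact: subalg_compl.
exact: wz.
Qed.

Lemma subalg_C_equiv : C_equiv imp (EB B).
Proof.
split; first by apply: EB_boolean; exact: subalg_compl.
move=> x y x' Y Exy _ [F [fF [YF Dx]]].
have [y' [Ex'y' Dy']] := EB_TA_lift Exy fF Dx.
have fG := ftrace_filter subalg_meet_closed fF.
exists y', (phi (ftrace B F)); split=> //; split; first exact: closed_phi fG.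
split; first by exists (ftrace B F).
by move=> z /(ftrace_preceq fF) [w [/YF wY Ezw]]; exists w.
Qed.

End Subalgebra.

Section CEquivalence.
Variable E : Ul -> Ul -> Prop.
Hypothesis hE : C_equiv imp E.

Lemma C_equiv_equivalence : equivalence E. Proof. by case: hE => [[]]. Qed.

Lemma saturated_imp a b : saturated E a -> saturated E b -> saturated E (imp a b).
Proof.
move=> Sa Sb x y xab Exy; apply: contrapT => /TA_not_imp [y' [Tyy' y'nb]].
have Eyx : E y x by case: C_equiv_equivalence => _ [Esym _]; exact: Esym.
have [y'' [C [Ey'y'' [_ [[G [fG [CG DG]]] CY]]]]] :=
  hE.2 y x y' _ Eyx (closed_phi (principal_filter a)) Tyy'.
have Ga : G a.
  apply: (saturated_preceq_mem C_equiv_equivalence fG Sa) => z /CG; exact: CY.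
have y''b : y'' ∋ b by apply: DG; exists a.
exact: ul_complN (saturated_back C_equiv_equivalence Sb Ey'y'' y''b) y'nb.
Qed.

Lemma C_equiv_saturated_subalg : subalg imp (saturated E).
Proof. exact: saturated_subalg C_equiv_equivalence saturated_imp. Qed.

End CEquivalence.

End ConditionalAlgebra.

Theorem theorem7p6 (d : Order.disp_t) (A : ctbDistrLatticeType d)
  (imp : A -> A -> A) (hA : cond_alg imp) :
  (* B |-> E_B maps subalgebras to C-equivalences *)
  (forall B : A -> Prop, subalg imp B -> C_equiv imp (EB B)) /\
  (* surjective onto C-equivalences *)
  (forall E : Ul -> Ul -> Prop, C_equiv imp E ->
     exists B : A -> Prop, subalg imp B /\ forall u v, E u v <-> EB B u v) /\
  (* order-reversing and order-reflecting (hence injective): dual isomorphism *)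
  (forall B B' : A -> Prop, subalg imp B -> subalg imp B' ->
     ((forall a, B a -> B' a) <-> (forall u v, EB B' u v -> EB B u v))).
Proof.
split; first exact: subalg_C_equiv.
split.
  move=> E hE; exists (saturated E); split; first exact: C_equiv_saturated_subalg.
  exact: boolean_equiv_EB_saturated hE.1.
move=> B B' _ [_ [B'bot [_ [B'join [B'compl _]]]]].
exact: EB_subset_iff.
Qed.
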